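(* Let $X$ be a metric space with $\operatorname{cdim}X\le n$. Then there are constants $c_0>0$, $\delta>0$ and $r_0>0$ such that for every $r\in(0,r_0)$ there exists a sequence of open coverings $\mathcal U_j$, $j\in\mathbb N$, of $X$ with: (i) there is one color set $A$ with $|A|=n+1$ such that for each $j$, $\mathcal U_j=\bigcup_{a\in A}\mathcal U_j^a$ where each $\mathcal U_j^a$ consists of pairwise disjoint sets; (ii) for every $j$, $\delta r^j\le\operatorname{mesh}(\mathcal U_j)\le r^j$ and $L(\mathcal U_j)\ge c_0\operatorname{mesh}(\mathcal U_j)$; (iii) for every $i>j$, $\mathcal U_i$ is inscribed in $\mathcal U_j$; (iv) for every $a\in A$ the union $\mathcal U^a=\bigcup_{j\in\mathbb N}\mathcal U_j^a$ is separated.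
   Context: A covering $\mathcal U'$ is inscribed in $\mathcal U$ if every member of $\mathcal U'$ is contained in some member of $\mathcal U$. A family is separated if any two different members are either disjoint or one contains the other. Capacity dimension: for an open covering $\mathcal U$ of a metric space $Z$ let $\operatorname{mesh}(\mathcal U,z)=\sup\{\operatorname{diam}U:z\in U\in\mathcal U\}$, $\operatorname{mesh}(\mathcal U)=\sup_U\operatorname{diam}U$, $L(\mathcal U,z)=\min\{\sup_{U\in\mathcal U}\operatorname{dist}(z,Z\setminus U),\operatorname{mesh}(\mathcal U,z)\}$, $L(\mathcal U)=\inf_zL(\mathcal U,z)$, $\operatorname{cap}(\mathcal U)=L(\mathcal U)/\operatorname{mesh}(\mathcal U)$ (set to $1$ if $\operatorname{mesh}=0$ or $L=\operatorname{mesh}=\infty$). A covering is $(m+1)$-colored if it is a union of $m+1$ subfamilies each of pairwise disjoint sets. For $\tau>0$, $\delta\in(0,1)$, integer $m\ge0$, $c_\tau(Z,m,\delta)$ is the supremum (0 if empty) of $\operatorname{cap}(\mathcal U)$ over open $(m+1)$-colored coverings with $\delta\tau\le\operatorname{mesh}(\mathcal U)\le\tau$; $c(Z,m,\delta)=\liminf_{\tau\to0}c_\tau(Z,m,\delta)$; $c(Z,m)=\lim_{\delta\to0}c(Z,m,\delta)$; $\operatorname{cdim}Z=\inf\{m:c(Z,m)>0\}$. *)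

(* metric given by an explicit distance d : T -> T -> R,
   R : realType; extended reals \bar R for sup/inf (diam, mesh, dist may be +oo). *)
From HB Require Import structures.
From mathcomp Require Import all_boot all_order all_algebra.
From mathcomp Require Import all_classical all_reals all_analysis.
Set Implicit Arguments. Unset Strict Implicit. Unset Printing Implicit Defensive.
Import Order.TTheory GRing.Theory Num.Theory.
Local Open Scope classical_set_scope.
Local Open Scope ring_scope.

Section CapDim.
Variables (R : realType) (T : Type) (d : T -> T -> R).

Definition is_metric : Prop :=
  (forall x y, 0 <= d x y) /\ (forall x y, d x y = 0 <-> x = y) /\
  (forall x y, d x y = d y x) /\ (forall x y z, d x z <= d x y + d y z).

Definition mopen (U : set T) : Prop :=
  forall x, U x -> exists2 e : R, 0 < e & forall y, d x y < e -> U y.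

Definition covering (UU : set (set T)) : Prop := forall x : T, exists2 U, UU U & U x.
Definition open_covering (UU : set (set T)) : Prop :=
  covering UU /\ forall U, UU U -> mopen U.

Definition inscribed_in (UU' UU : set (set T)) : Prop :=
  forall U', UU' U' -> exists2 U, UU U & U' `<=` U.

Definition pairwise_disjoint (UU : set (set T)) : Prop :=
  forall U V, UU U -> UU V -> U <> V -> U `&` V = set0.

Definition separated_family (UU : set (set T)) : Prop :=
  forall U V, UU U -> UU V -> U <> V -> U `&` V = set0 \/ U `<=` V \/ V `<=` U.

Definition colored (k : nat) (UU : set (set T)) : Prop :=
  exists F : 'I_k -> set (set T), UU = \bigcup_i F i /\ forall i, pairwise_disjoint (F i).

Local Open Scope ereal_scope.

(* diameter (0 for the empty set) *)
Definition diam (U : set T) : \bar R :=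
  ereal_sup ([set 0] `|` [set z | exists x y, U x /\ U y /\ z = (d x y)%:E]).

Definition mesh_at (UU : set (set T)) (z : T) : \bar R :=
  ereal_sup (diam @` [set U | UU U /\ U z]).

Definition mesh (UU : set (set T)) : \bar R :=
  ereal_sup ([set 0] `|` diam @` UU).

(* dist(z, A) ; = +oo when A is empty *)
Definition dist_to (z : T) (A : set T) : \bar R :=
  ereal_inf [set (d z y)%:E | y in A].

Definition L_at (UU : set (set T)) (z : T) : \bar R :=
  Order.min (ereal_sup [set dist_to z (~` U) | U in UU]) (mesh_at UU z).

Definition L (UU : set (set T)) : \bar R := ereal_inf (range (L_at UU)).

(* capacity: L/mesh, = 1 if mesh = 0 or L = mesh = +oo, L/+oo = 0 otherwise *)
Definition cap (UU : set (set T)) : \bar R :=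
  if (mesh UU == 0) || ((L UU == +oo) && (mesh UU == +oo)) then 1
  else if mesh UU == +oo then 0
  else ((fine (L UU)) / (fine (mesh UU)))%:E.

Definition c_tau (m : nat) (delta tau : R) : \bar R :=
  ereal_sup ([set 0] `|` [set cap UU | UU in
     [set UU | open_covering UU /\ colored m.+1 UU /\
               ((delta * tau)%:E <= mesh UU) /\ (mesh UU <= tau%:E)]]).

(* c(Z, m, delta) = liminf_{tau -> 0+} c_tau(Z, m, delta) *)
Definition c_delta (m : nat) (delta : R) : \bar R :=
  ereal_sup [set ereal_inf [set c_tau m delta t | t in [set t : R | (0 < t < e)%R]]
            | e in [set e : R | (0 < e)%R]].

Definition c_m (m : nat) : \bar R := lim (c_delta m delta @[delta --> 0%R^'+]).

(* cdim Z <= n, where cdim Z = inf {m | c(Z,m) > 0} (inf of the empty set = oo) *)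
Definition cdim_le (n : nat) : Prop := exists m : nat, (m <= n)%N /\ 0 < c_m m.

End CapDim.

From HB Require Import structures.
From mathcomp Require Import all_boot all_order all_algebra.
From mathcomp Require Import all_classical all_reals all_analysis.
From mathcomp Require Import lra.
Import Order.TTheory GRing.Theory Num.Theory.
Set Implicit Arguments. Unset Strict Implicit. Unset Printing Implicit Defensive.
Local Open Scope classical_set_scope.
Local Open Scope ring_scope.

(* Positive capacity in some dimension [m <= n] gives, at every small scale [t], an
   open covering by [n + 1] families of pairwise disjoint sets with mesh at most [t]
   and Lebesgue number at least [lam t], together with, around every point [x], a
   point at distance between [lam t / 2] and [t] from [x].  Take such colorings at the
   scales [r^k / 2] and replace each member [V] of level [k] by its core, the points
   more than [r^(k+1)] deep in [V]: cores of one color and level are then more than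
   [r^(k+1)] apart, while the cores of level [k] still contain balls of radius
   [mu r^k] around every point.  The level-[j] member of color [a] through a core [B]
   collects all cores of color [a] and level [>= j] reachable from [B] through
   overlapping such cores.  As [r <= 1/4], the deeper levels contribute a geometric
   series, so such a chain starting from a level-[k] core stays [r^(k+1)]-close to
   it and never reaches another core of level [k].  Hence members of one color and
   level are disjoint of diameter at most [r^j], and since a chain through cores of
   level [>= i] is also one through cores of level [>= j] for [j <= i], two members
   of one color are either disjoint or nested. *)

Section Chains.
Variables (R : realType) (T : Type) (d : T -> T -> R).
Variable piece : nat -> set T -> Prop.

Definition node := (nat * set T)%type.

Definition link (k : nat) (X Y : node) : Prop :=
  [/\ (k <= X.1)%N, (k <= Y.1)%N, piece X.1 X.2, piece Y.1 Y.2 & exists z, X.2 z /\ Y.2 z].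

(* The length index only serves the strong induction in [chain_close_bounded]. *)
Inductive chain (k : nat) : nat -> node -> node -> Prop :=
| chain0 X : chain k 0 X X
| chainS n X Y Z : link k X Y -> chain k n Y Z -> chain k n.+1 X Z.

Lemma link_sym k X Y : link k X Y -> link k Y X.
Proof. by case=> kX kY pX pY [z [Xz Yz]]; split => //; exists z. Qed.

Lemma chain_cat k m1 m2 X Y Z :
  chain k m1 X Y -> chain k m2 Y Z -> chain k (m1 + m2) X Z.
Proof. by elim=> // m X' Y' Z' l _ IH /IH; exact: chainS. Qed.

Lemma chain_rev k m X Y : chain k m X Y -> chain k m Y X.
Proof.
elim=> [X'|m' X' Y' Z' l _ IH]; first exact: chain0.
rewrite -addn1; apply: chain_cat IH (chainS (link_sym l) (chain0 _ _)).
Qed.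

Lemma chain_level k m X Y : chain k m X Y -> (k <= X.1)%N -> (k <= Y.1)%N.
Proof. by elim=> // m' X' Y' Z' [] _ kY _ _ _ _ IH _; exact: IH. Qed.

Lemma chain_piece k m X Y : chain k m X Y -> piece X.1 X.2 -> piece Y.1 Y.2.
Proof. by elim=> // m' X' Y' Z' [] _ _ _ pY _ _ IH _; exact: IH. Qed.

Lemma chain_le k k' m X Y : (k' <= k)%N -> chain k m X Y -> chain k' m X Y.
Proof.
move=> k'k; elim=> [X'|m' X' Y' Z' [] kX kY pX pY XY _ IH]; first exact: chain0.
by apply: chainS IH; split=> //; apply: leq_trans k'k _.
Qed.

Lemma chain_split k m X Y : chain k m X Y -> (k <= X.1)%N ->
  (exists Z m1 m2, [/\ m = (m1 + m2)%N, chain k m1 X Z, chain k m2 Z Y & Z.1 = k])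
  \/ (chain k.+1 m X Y /\ (k < X.1)%N).
Proof.
elim=> [X'|m' X' Y' Z' l c IH] kX.
  have [kX'|X'k] := ltnP k X'.1; first by right; split => //; exact: chain0.
  by left; exists X', 0%N, 0%N; split => //; [exact: chain0 | exact: chain0 |
    apply/eqP; rewrite eqn_leq X'k kX].
have [kX'|X'k] := ltnP k X'.1; last first.
  left; exists X', 0%N, m'.+1; split; [by [] | exact: chain0 | exact: chainS l c |].
  by apply/eqP; rewrite eqn_leq X'k kX.
have [_ kY _ _ _] := l.
case: (IH kY) => [[Z [m1 [m2 [-> c1 c2 Zk]]]]|[c' kY']].
  by left; exists Z, m1.+1, m2; split => //; exact: chainS l c1.
right; split => //; apply: chainS c'.
by case: l => _ _ pX pY XY; split.
Qed.

Lemma chain_bottom k m X Y : (k <= X.1)%N -> chain k m X Y ->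
  exists k' Z m1 m2,
    [/\ (k <= k')%N, m = (m1 + m2)%N, chain k' m1 X Z, chain k' m2 Z Y & Z.1 = k'].
Proof.
move=> kX; have [i Xi] : exists i, X.1 = (k + i)%N by exists (X.1 - k)%N; rewrite subnKC.
elim: i k Xi {kX} => [|i IH] k Xi c.
  case: (chain_split c _); first by rewrite Xi addn0.
    by move=> [Z [m1 [m2 [-> c1 c2 Zk]]]]; exists k, Z, m1, m2.
  by move=> [_]; rewrite Xi addn0 ltnn.
case: (chain_split c _); first by rewrite Xi leq_addr.
  by move=> [Z [m1 [m2 [-> c1 c2 Zk]]]]; exists k, Z, m1, m2.
move=> [c' _]; have Xi' : X.1 = (k.+1 + i)%N by rewrite Xi addnS.
have [k' [Z [m1 [m2 [kk' -> c1 c2 Zk']]]]] := IH k.+1 Xi' c'.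
by exists k', Z, m1, m2; split => //; exact: ltnW.
Qed.

Hypothesis dxx : forall x, d x x = 0.
Hypothesis dsym : forall x y, d x y = d y x.
Hypothesis dtri : forall x y z, d x z <= d x y + d y z.
Variable r : R.
Hypothesis r_ge0 : 0 <= r.
Hypothesis r_le : r <= 1 / 4.
Hypothesis piece_diam : forall k B x y, piece k B -> B x -> B y -> d x y <= r ^+ k / 2.
Hypothesis piece_gap : forall k B B' x y,
  piece k B -> piece k B' -> B <> B' -> B x -> B' y -> r ^+ k.+1 < d x y.

Definition chain_close (m : nat) := forall k X Y,
  chain k m X Y -> piece X.1 X.2 -> X.1 = k ->
  (forall y, Y.2 y -> exists2 x, X.2 x & d x y <= r ^+ k.+1) /\ (Y.1 = k -> Y.2 = X.2).

Definition chain_bounded (m : nat) := forall k X Y,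
  chain k m X Y -> piece X.1 X.2 -> (k <= X.1)%N ->
  forall x y, X.2 x -> Y.2 y -> d x y <= r ^+ k.

Lemma same_level_piece_eq k B B' x : piece k B -> piece k B' -> B x ->
  (exists2 y, B' y & d x y <= r ^+ k.+1) -> B = B'.
Proof.
move=> pB pB' Bx [y B'y xy]; apply: contrapT => BB'.
by have := piece_gap pB pB' BB' Bx B'y; rewrite ltNge xy.
Qed.

(* Route the chain through a piece of minimal level [k'] and use the diameter of
   that piece: [r^(k'+1) + r^k' / 2 + r^(k'+1) <= r^k'] as [r <= 1/4]. *)
Lemma chain_bounded_of_close m :
  (forall m', (m' <= m)%N -> chain_close m') -> chain_bounded m.
Proof.
move=> close k X Y c pX kX x y Xx Yy.
have [k' [Z [m1 [m2 [kk' mE c1 c2 Zk']]]]] := chain_bottom kX c; subst m.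
have pZ := chain_piece c1 pX.
have [near1 _] := close m1 (leq_addr _ _) _ _ _ (chain_rev c1) pZ Zk'.
have [near2 _] := close m2 (leq_addl _ _) _ _ _ c2 pZ Zk'.
have [z1 Zz1 z1x] := near1 x Xx; have [z2 Zz2 z2y] := near2 y Yy.
have z1z2 := piece_diam pZ Zz1 Zz2; rewrite Zk' in z1z2.
rewrite dsym in z1x; rewrite exprS in z1x z2y.
have r_le1 : r <= 1 by move: r_le; lra.
have rk'k : r ^+ k' <= r ^+ k := ler_wiXn2l r_ge0 r_le1 kk'.
have rk'_ge0 : 0 <= r ^+ k' := exprn_ge0 k' r_ge0.
have : d x y <= d x z1 + d z1 z2 + d z2 y.
  by apply: le_trans (dtri x z1 y) _; rewrite -addrA lerD2l.
have : r * r ^+ k' <= r ^+ k' / 4 by move: r_le; nra.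
lra.
Qed.

Lemma chain_close_of_shorter m :
  (forall m', (m' < m)%N -> chain_close m' /\ chain_bounded m') -> chain_close m.
Proof.
move=> IH k X Y c pX Xk; case: c IH pX Xk => [X' | m' X' Y' Z' l c] IH pX Xk.
  by split => // y Xy; exists y; rewrite ?dxx ?exprn_ge0.
have [_ kY _ pY [w [X'w Y'w]]] := l.
have pX' : piece k X'.2 by rewrite -Xk.
have [Yk|] := eqVneq Y'.1 k.
  have pY' : piece k Y'.2 by rewrite -Yk.
  have -> : X'.2 = Y'.2.
    by apply: same_level_piece_eq pX' pY' X'w _; exists w; rewrite ?dxx ?exprn_ge0.
  by have [close _] := IH m' (ltnSn _); exact: close c pY Yk.
rewrite eq_sym => kY'; have {kY'}kY : (k < Y'.1)%N by rewrite ltn_neqAle kY' kY.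
case: (chain_split c (ltnW kY)) => [[Z [m1 [m2 [m'E c1 c2 Zk]]]]|[c' _]].
  subst m'; have pZ := chain_piece c1 pY.
  have [close1 _] := IH m1 (leq_addr _ _).
  have [close2 _] := IH m2 (leq_addl _ _).
  have -> : X'.2 = Z.2.
    have [near1 _] := close1 k Z Y' (chain_rev c1) pZ Zk.
    have [z Zz zw] := near1 w Y'w.
    have pZ' : piece k Z.2 by rewrite -Zk.
    by apply: esym; apply: same_level_piece_eq pZ' pX' Zz _; exists w.
  exact: close2 k Z Z' c2 pZ Zk.
have [_ bounded] := IH m' (ltnSn _).
split=> [y Z'y|Z'k]; first by exists w => //; exact: bounded c' pY kY w y Y'w Z'y.
by have := chain_level c' kY; rewrite Z'k ltnn.
Qed.

Lemma chain_close_bounded m : chain_close m /\ chain_bounded m.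
Proof.
elim/ltn_ind: m => m IH; have close_m := chain_close_of_shorter IH.
split=> //; apply: chain_bounded_of_close => m'.
by rewrite leq_eqVlt => /predU1P[-> // | /IH[]].
Qed.

Lemma chain_diam k m X Y : chain k m X Y -> piece X.1 X.2 -> (k <= X.1)%N ->
  forall x y, X.2 x -> Y.2 y -> d x y <= r ^+ k.
Proof. by have [_] := chain_close_bounded m; apply. Qed.

Lemma chain_same_level k m X Y : chain k m X Y -> piece X.1 X.2 ->
  X.1 = k -> Y.1 = k -> Y.2 = X.2.
Proof.
have [close _] := chain_close_bounded m => c pX Xk.
by have [] := close k X Y c pX Xk.
Qed.

End Chains.

Section Coverings.
Variables (R : realType) (T : Type) (d : T -> T -> R).
Local Open Scope ereal_scope.

Lemma diam_le U (b : R) : (0 <= b)%R -> (forall x y, U x -> U y -> (d x y <= b)%R) ->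
  diam d U <= b%:E.
Proof.
move=> b_ge0 Ub; apply: ge_ereal_sup => _ [->|[x [y [Ux [Uy ->]]]]]; rewrite lee_fin //.
exact: Ub.
Qed.

Lemma dist_le_diam U x y : U x -> U y -> (d x y)%:E <= diam d U.
Proof. by move=> Ux Uy; apply: ereal_sup_ubound; right; exists x, y. Qed.

Lemma diam_le_mesh UU U : UU U -> diam d U <= mesh d UU.
Proof. by move=> UUU; apply: ereal_sup_ubound; right; exists U. Qed.

Lemma dist_le_mesh UU U x y : UU U -> U x -> U y -> (d x y)%:E <= mesh d UU.
Proof. by move=> UUU Ux Uy; apply: le_trans (dist_le_diam Ux Uy) (diam_le_mesh UUU). Qed.

Lemma mesh_le UU (b : R) : (0 <= b)%R ->
  (forall U x y, UU U -> U x -> U y -> (d x y <= b)%R) -> mesh d UU <= b%:E.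
Proof.
move=> b_ge0 UUb; apply: ge_ereal_sup => _ [->|[U UUU <-]]; first by rewrite lee_fin.
by apply: diam_le => // x y; exact: UUb.
Qed.

Lemma L_gt_ball UU (s : R) x : s%:E < L d UU ->
  exists2 U, UU U & forall y, (d x y < s)%R -> U y.
Proof.
move=> sL; have : s%:E < L_at d UU x.
  by apply: lt_le_trans sL _; apply: ereal_inf_lbound; exists x.
rewrite /L_at lt_min => /andP[/ereal_sup_gt[_ [U UUU <-] sU] _].
exists U => // y xy; apply: contrapT => nUy.
have : dist_to d x (~` U) <= (d x y)%:E by apply: ereal_inf_lbound; exists y.
by move/(lt_le_trans sU); rewrite lte_fin ltNge (ltW xy).
Qed.

Lemma L_ge_ball UU (s : R) :
  (forall x, exists U, [/\ UU U, U x, forall y, (d x y < s)%R -> U y &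
                                      exists2 y, U y & (s <= d x y)%R]) ->
  s%:E <= L d UU.
Proof.
move=> ball; apply: le_ereal_inf_tmp => _ [x _ <-].
have [U [UUU Ux xU [y Uy xy]]] := ball x.
rewrite /L_at le_min; apply/andP; split.
  apply: le_trans (_ : _ <= dist_to d x (~` U)) _; last by apply: ereal_sup_ubound; exists U.
  apply: le_ereal_inf_tmp => _ [z nUz <-]; rewrite lee_fin leNgt.
  by apply/negP => /xU.
apply: le_trans (_ : _ <= (d x y)%:E) _; first by rewrite lee_fin.
by apply: le_trans (dist_le_diam Ux Uy) _; apply: ereal_sup_ubound; exists U.
Qed.

Lemma mesh_gt0_inhabited UU : 0 < mesh d UU -> inhabited T.
Proof.
move=> /ereal_sup_gt[z [->|[U _ <-]] z_gt0]; first by rewrite ltxx in z_gt0.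
by have /ereal_sup_gt[w [->|[x _]]] := z_gt0; [rewrite ltxx | exists].
Qed.

Hypothesis dsym : forall x y, d x y = d y x.
Hypothesis dtri : forall x y z, (d x z <= d x y + d y z)%R.

(* The mesh bound at [x] provides two points of a member around [x] that are more
   than [s] apart, so one of them is more than [s / 2] away from [x]. *)
Lemma L_gt_far_point UU (s : R) x : (0 < s)%R -> s%:E < L d UU ->
  exists U y, [/\ UU U, U x, U y & (s / 2 < d x y)%R].
Proof.
move=> s_gt0 sL; have : s%:E < L_at d UU x.
  by apply: lt_le_trans sL _; apply: ereal_inf_lbound; exists x.
rewrite /L_at lt_min => /andP[_ /ereal_sup_gt[_ [U [UUU Ux] <-] sU]].
have /ereal_sup_gt[_ [->|[p [q [Up [Uq ->]]]]] spq] := sU.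
  by move: spq; rewrite lte_fin; lra.
rewrite lte_fin in spq; have := dtri p x q; rewrite (dsym p x) => pq.
have [xp|xp] := lerP (d x p) (s / 2).
  by exists U, q; split => //; lra.
by exists U, p.
Qed.

End Coverings.

Lemma colored_widen (T : Type) k k' (UU : set (set T)) :
  (k <= k')%N -> colored k UU -> colored k' UU.
Proof.
move=> kk' [F [-> F_disj]].
exists (fun a : 'I_k' => \bigcup_(i in [set i : 'I_k | val i = val a]) F i); split.
  apply/seteqP; split=> U [i _ FiU]; last by case: FiU => j /= ji FjU; exists j.
  by exists (widen_ord kk' i) => //; exists i.
move=> a U V [i /= ia FiU] [j /= ja FjV].
have ji : j = i by apply: ord_inj; rewrite ja ia.
by subst j; exact: (F_disj i U V FiU FjV).
Qed.

Section Capacity.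
Variables (R : realType) (T : Type) (d : T -> T -> R).

Lemma c_tau_ge0 m de t : (0 <= c_tau d m de t)%E.
Proof. by apply: ereal_sup_ubound; left. Qed.

Lemma c_delta_ge0 m de : (0 <= c_delta d m de)%E.
Proof.
apply: le_trans (ereal_sup_ubound _); last by exists 1 => //=; exact: ltr01.
by apply: le_ereal_inf_tmp => _ [t _ <-]; exact: c_tau_ge0.
Qed.

Lemma c_m_gt0_c_delta m : (0 < c_m d m)%E ->
  exists2 de : R, 0 < de & (0 < c_delta d m de)%E.
Proof.
move=> c_m_gt0; apply: contrapT => no_de; move: c_m_gt0.
suff -> : c_m d m = 0%E by rewrite ltxx.
apply: (lim_near_cst (@ereal_hausdorff R)); near=> de.
have de_gt0 : 0 < de by near: de; exact: nbhs_right_gt.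
apply/eqP; rewrite eq_le c_delta_ge0 andbT leNgt; apply/negP => c_gt0.
by apply: no_de; exists de.
Unshelve. all: by end_near.
Qed.

Lemma ereal_gt0_gt_fin (x : \bar R) : (0 < x)%E -> exists2 c : R, 0 < c & (c%:E < x)%E.
Proof.
case: x => [x||] //= x_gt0; last by exists 1; [exact: ltr01 | exact: ltry].
by rewrite lte_fin in x_gt0; exists (x / 2); rewrite ?lte_fin; lra.
Qed.

Lemma c_delta_gt0_coverings m de : (0 < c_delta d m de)%E ->
  exists c e : R, [/\ 0 < c, 0 < e & forall t, 0 < t < e -> exists UU,
    [/\ open_covering d UU, colored m.+1 UU, ((de * t)%:E <= mesh d UU)%E,
        (mesh d UU <= t%:E)%E & (c%:E < cap d UU)%E]].
Proof.
move=> /ereal_sup_gt[_ [e e_gt0 <-] inf_gt0].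
have [c c_gt0 c_lt] := ereal_gt0_gt_fin inf_gt0.
exists c, e; split => // t t_in.
have : (c%:E < c_tau d m de t)%E.
  by apply: lt_le_trans c_lt _; apply: ereal_inf_lbound; exists t.
move=> /ereal_sup_gt[_ [->|[UU [UUcov [UUcol [lo hi]]] <-]] c_lt_cap].
  by move: c_lt_cap; rewrite lte_fin ltNge (ltW c_gt0).
by exists UU; split.
Qed.

Lemma cap_gt_L_gt UU c b t : 0 < c -> 0 < b ->
  (b%:E <= mesh d UU)%E -> (mesh d UU <= t%:E)%E -> (c%:E < cap d UU)%E ->
  ((c * b)%:E < L d UU)%E.
Proof.
move=> c_gt0 b_gt0 bM Mt; rewrite /cap.
case hM : (mesh d UU) bM Mt => [M| |] bM Mt; last 2 first.
- by move: Mt; rewrite leNgt ltey.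
- by move: bM; rewrite leNgt ltNyr.
rewrite lee_fin in bM; have M_gt0 : 0 < M by exact: lt_le_trans bM.
rewrite eqe (gt_eqF M_gt0) /=; case: (L d UU) => [l| |] //=.
  rewrite !lte_fin ltr_pdivlMr // => cMl.
  by apply: le_lt_trans cMl; rewrite ler_pM2l.
- by rewrite ltry.
- by rewrite mul0r lte_fin ltNge (ltW c_gt0).
Qed.

Definition lebesgue_coloring n (lam t : R) (F : 'I_n.+1 -> set (set T)) : Prop :=
  [/\ forall a U, F a U -> mopen d U,
      forall a, pairwise_disjoint (F a),
      forall a U x y, F a U -> U x -> U y -> d x y <= t &
      forall x, exists a U, F a U /\ forall y, d x y < lam * t -> U y].

(* [lam] is a lower bound for the capacity times the ratio [delta]. *)
Lemma cdim_le_lebesgue_colorings n : is_metric d -> cdim_le d n ->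
  exists lam e : R, [/\ 0 < lam, 0 < e, inhabited T,
    forall t, 0 < t < e -> exists F : 'I_n.+1 -> set (set T), lebesgue_coloring lam t F &
    forall t, 0 < t < e -> forall x, exists y, lam * t / 2 < d x y <= t].
Proof.
move=> [_ [_ [dsym dtri]]] [m [mn c_m_gt0]].
have [de de_gt0] := c_m_gt0_c_delta c_m_gt0.
move=> /c_delta_gt0_coverings[c [e [c_gt0 e_gt0 cover]]].
have lam_gt0 : 0 < c * de by exact: mulr_gt0.
have L_gt t UU : 0 < t -> ((de * t)%:E <= mesh d UU)%E -> (mesh d UU <= t%:E)%E ->
    (c%:E < cap d UU)%E -> ((c * de * t)%:E < L d UU)%E.
  by move=> t_gt0 lo hi c_lt; rewrite -mulrA; apply: cap_gt_L_gt hi c_lt; rewrite ?mulr_gt0.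
exists (c * de), e; split => //.
- have e2_in : 0 < e / 2 < e by apply/andP; split; lra.
  have [UU [_ _ lo _ _]] := cover _ e2_in.
  apply: (@mesh_gt0_inhabited _ _ d UU); apply: lt_le_trans lo.
  by rewrite lte_fin mulr_gt0 ?divr_gt0.
- move=> t t_in; have t_gt0 : 0 < t by case/andP: t_in.
  have [UU [[_ UUopen] UUcol lo hi c_lt]] := cover t t_in.
  have [F [UUE F_disj]] := colored_widen (mn : (m.+1 <= n.+1)%N) UUcol.
  have UU_F a U : F a U -> UU U by move=> FaU; rewrite UUE; exists a.
  exists F; split => //.
  + by move=> a U /UU_F; exact: UUopen.
  + move=> a U x y /UU_F UUU Ux Uy; rewrite -lee_fin.
    exact: le_trans (dist_le_mesh d UUU Ux Uy) hi.
  + move=> x; have [U + xU] := L_gt_ball x (L_gt t UU t_gt0 lo hi c_lt).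
    by rewrite UUE => -[a _ FaU]; exists a, U.
- move=> t t_in x; have t_gt0 : 0 < t by case/andP: t_in.
  have [UU [_ _ lo hi c_lt]] := cover t t_in.
  have lamt_gt0 : 0 < c * de * t by rewrite mulr_gt0.
  have [U [y [UUU Ux Uy far]]] :=
    L_gt_far_point dsym dtri x lamt_gt0 (L_gt t UU t_gt0 lo hi c_lt).
  exists y; rewrite far -lee_fin /=.
  exact: le_trans (dist_le_mesh d UUU Ux Uy) hi.
Qed.

Lemma scale_in_range (r e s : R) k : 0 < r < e -> r <= 1 -> 0 < s <= 1 ->
  (0 < k)%N -> 0 < s * r ^+ k / 2 < e.
Proof.
move=> /andP[r_gt0 r_lt_e] r_le1 /andP[s_gt0 s_le1] k_gt0.
have rk_gt0 := exprn_gt0 k r_gt0.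
have := ler_wiXn2l (ltW r_gt0) r_le1 k_gt0; rewrite expr1 => rk_le.
have srk_le := ler_piMl (ltW rk_gt0) s_le1.
by rewrite divr_gt0 ?mulr_gt0 //=; lra.
Qed.

Lemma lebesgue_colorings_at_powers n (lam e r : R) : 0 < r < e -> r <= 1 ->
  (forall t, 0 < t < e -> exists F : 'I_n.+1 -> set (set T), lebesgue_coloring lam t F) ->
  exists F : nat -> 'I_n.+1 -> set (set T),
    forall k, (0 < k)%N -> lebesgue_coloring lam (r ^+ k / 2) (F k).
Proof.
move=> r_in r_le1 colorings.
suff /choice[F F_lebesgue] : forall k, exists F : 'I_n.+1 -> set (set T),
    (0 < k)%N -> lebesgue_coloring lam (r ^+ k / 2) F by exists F.
move=> k; have [->|k_gt0] := posnP k; first by exists (fun=> set0).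
have one_in : 0 < (1 : R) <= 1 by rewrite ltr01 lexx.
have := scale_in_range r_in r_le1 one_in k_gt0; rewrite mul1r => /colorings[F].
by exists F.
Qed.

End Capacity.

Section Construction.
Variables (R : realType) (T : Type) (d : T -> T -> R).
Hypothesis dxx : forall x, d x x = 0.
Hypothesis dsym : forall x y, d x y = d y x.
Hypothesis dtri : forall x y z, d x z <= d x y + d y z.
Variables (n : nat) (lam mu r : R) (F : nat -> 'I_n.+1 -> set (set T)).
Hypothesis mu_gt0 : 0 < mu.
Hypothesis mu_le1 : mu <= 1.
Hypothesis mu_le_lam : 4 * mu <= lam.
Hypothesis r_gt0 : 0 < r.
Hypothesis r_le : r <= 1 / 4.
Hypothesis r_lt_mu : r < mu.
Hypothesis F_lebesgue : forall k, (0 < k)%N -> lebesgue_coloring d lam (r ^+ k / 2) (F k).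
Hypothesis far_points : forall j, (0 < j)%N -> forall x,
  exists y, lam * (mu * r ^+ j / 2) / 2 < d x y <= mu * r ^+ j / 2.
Hypothesis T_inhabited : inhabited T.

Definition deep (s : R) (V : set T) : set T :=
  [set x | exists2 e, s < e & forall y, d x y < e -> V y].

Definition core (a : 'I_n.+1) (k : nat) (B : set T) : Prop :=
  (0 < k)%N /\ exists2 V, F k a V & B = deep (r ^+ k.+1) V.

Definition cluster a j (B : set T) : set T :=
  [set x | exists N : node T, (exists m, chain (core a) j m (j, B) N) /\ N.2 x].

Definition level_family j a : set (set T) :=
  [set U | exists2 V, F j a V & U = cluster a j (deep (r ^+ j.+1) V)].

Lemma deep_sub s V : 0 <= s -> deep s V `<=` V.
Proof. by move=> s_ge0 x [e se xV]; apply: xV; rewrite dxx; lra. Qed.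

Lemma deep_open s V : mopen d (deep s V).
Proof.
move=> x [e se xV]; exists (e - s); first by lra.
move=> y xy; exists (e - d x y); first by lra.
by move=> z yz; apply: xV; have := dtri x y z; lra.
Qed.

Lemma core_diam a k B x y : core a k B -> B x -> B y -> d x y <= r ^+ k / 2.
Proof.
move=> [k_gt0 [V FV ->]] Bx By; have [_ _ F_diam _] := F_lebesgue k_gt0.
have s_ge0 : 0 <= r ^+ k.+1 by rewrite exprn_ge0 ?ltW.
by apply: (F_diam a V) => //; exact: deep_sub s_ge0 _ _.
Qed.

Lemma core_gap a k B B' x y : core a k B -> core a k B' -> B <> B' -> B x -> B' y ->
  r ^+ k.+1 < d x y.
Proof.
move=> [k_gt0 [V FV ->]] [_ [V' FV' ->]] BB' [e se xV] B'y.
have [_ F_disj _ _] := F_lebesgue k_gt0.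
have VV' : V <> V' by move=> VV'; apply: BB'; rewrite VV'.
have V'y : V' y by apply: deep_sub B'y; rewrite exprn_ge0 ?ltW.
apply: lt_le_trans se _; rewrite leNgt; apply/negP => /xV Vy.
have : (V `&` V') y by split.
by rewrite (F_disj a V V' FV FV' VV').
Qed.

(* The Lebesgue ball of [V] at level [j] has radius [lam r^j / 2 >= 2 mu r^j], so
   the smaller ball of radius [mu r^j] consists of points [r^(j+1)]-deep in [V]. *)
Lemma ball_deep j V x : (forall y, d x y < lam * (r ^+ j / 2) -> V y) ->
  forall y, d x y < mu * r ^+ j -> deep (r ^+ j.+1) V y.
Proof.
move=> xV y xy; exists (lam * (r ^+ j / 2) - d x y).
  have rj_gt0 := exprn_gt0 j r_gt0; rewrite exprS.
  have : r * r ^+ j < mu * r ^+ j by rewrite ltr_pM2r.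
  have : 4 * mu * r ^+ j <= lam * r ^+ j by rewrite ler_pM2r.
  lra.
by move=> z yz; apply: xV; have := dtri x y z; lra.
Qed.

Lemma sub_cluster a j B : B `<=` cluster a j B.
Proof. by move=> x Bx; exists (j, B); split => //; exists 0%N; exact: chain0. Qed.

Lemma cluster_open a j B : core a j B -> mopen d (cluster a j B).
Proof.
move=> cB x [N [[m c] Nx]]; have [_ [V _ NE]] := chain_piece c cB.
rewrite NE in Nx; have [e e_gt0 xN] := deep_open Nx.
by exists e => // y /xN Ny; exists N; split; [exists m | rewrite NE].
Qed.

Lemma cluster_diam a j B x y : core a j B ->
  cluster a j B x -> cluster a j B y -> d x y <= r ^+ j.
Proof.
move=> cB [N1 [[m1 c1] N1x]] [N2 [[m2 c2] N2y]].
apply: (chain_diam dxx dsym dtri (ltW r_gt0) r_le (@core_diam a) (@core_gap a)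
          (chain_cat (chain_rev c1) c2)) N1x N2y.
  exact: chain_piece c1 cB.
exact: chain_level c1 (leqnn j).
Qed.

Lemma cluster_meet_chain a j i B1 B2 z : (j <= i)%N -> core a j B1 -> core a i B2 ->
  cluster a j B1 z -> cluster a i B2 z -> exists m, chain (core a) j m (j, B1) (i, B2).
Proof.
move=> ji cB1 cB2 [N1 [[m1 c1] N1z]] [N2 [[m2 c2] N2z]].
have l : link (core a) j N1 N2.
  split; [exact: chain_level c1 (leqnn j) | exact: leq_trans ji (chain_level c2 (leqnn i)) |
          exact: chain_piece c1 cB1 | exact: chain_piece c2 cB2 | by exists z].
by eexists; exact: chain_cat c1 (chainS l (chain_le ji (chain_rev c2))).
Qed.

Lemma cluster_same a j B1 B2 z : core a j B1 -> core a j B2 ->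
  cluster a j B1 z -> cluster a j B2 z -> B1 = B2.
Proof.
move=> cB1 cB2 B1z B2z; have [m c] := cluster_meet_chain (leqnn j) cB1 cB2 B1z B2z.
by apply: esym; exact: (chain_same_level dxx dsym dtri (ltW r_gt0) r_le
                          (@core_diam a) (@core_gap a) c cB1).
Qed.

Lemma cluster_nest a j i B1 B2 z : (j <= i)%N -> core a j B1 -> core a i B2 ->
  cluster a j B1 z -> cluster a i B2 z -> cluster a i B2 `<=` cluster a j B1.
Proof.
move=> ji cB1 cB2 B1z B2z w [N [[m3 c3] Nw]].
have [m c] := cluster_meet_chain ji cB1 cB2 B1z B2z.
by exists N; split => //; eexists; exact: chain_cat c (chain_le ji c3).
Qed.

Lemma level_family_core j a U : (0 < j)%N -> level_family j a U ->
  exists2 B, core a j B & U = cluster a j B.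
Proof.
by move=> j_gt0 [V FV ->]; exists (deep (r ^+ j.+1) V) => //; split => //; exists V.
Qed.

Lemma level_family_ball j x : (0 < j)%N -> exists U,
  [/\ (\bigcup_a level_family j a) U, U x, forall y, d x y < mu * r ^+ j -> U y &
      exists2 y, U y & mu * mu * r ^+ j <= d x y].
Proof.
move=> j_gt0; have [_ _ _ leb] := F_lebesgue j_gt0; have [a [V [FV xV]]] := leb x.
set U := cluster a j (deep (r ^+ j.+1) V).
have ball y : d x y < mu * r ^+ j -> U y.
  by move=> xy; apply: sub_cluster; exact: ball_deep xV _ xy.
have murj_gt0 : 0 < mu * r ^+ j by rewrite mulr_gt0 ?exprn_gt0.
have [y /andP[far near]] := far_points j_gt0 x.
exists U; split; first by exists a => //; exists V.
- by apply: ball; rewrite dxx.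
- exact: ball.
exists y; first by apply: ball; lra.
have : mu * (mu * r ^+ j) <= lam / 4 * (mu * r ^+ j).
  by rewrite ler_pM2r //; move: mu_le_lam; lra.
lra.
Qed.

Lemma level_family_open_covering j : (0 < j)%N ->
  open_covering d (\bigcup_a level_family j a) /\ forall a, pairwise_disjoint (level_family j a).
Proof.
move=> j_gt0; split; first split.
- by move=> x; have [U [UU Ux _ _]] := level_family_ball x j_gt0; exists U.
- by move=> U [a _ /(level_family_core j_gt0)[B cB ->]]; exact: cluster_open.
move=> a U V /(level_family_core j_gt0)[B1 cB1 ->].
move=> /(level_family_core j_gt0)[B2 cB2 ->] UV.
rewrite -subset0 => z [B1z B2z]; apply: UV.
by rewrite (cluster_same cB1 cB2 B1z B2z).
Qed.

Lemma level_family_mesh_le j : (0 < j)%N ->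
  (mesh d (\bigcup_a level_family j a) <= (r ^+ j)%:E)%E.
Proof.
move=> j_gt0; apply: mesh_le; first by rewrite exprn_ge0 ?ltW.
by move=> U x y [a _ /(level_family_core j_gt0)[B cB ->]]; exact: cluster_diam.
Qed.

Lemma level_family_mesh_ge j : (0 < j)%N ->
  ((mu * mu * r ^+ j)%:E <= mesh d (\bigcup_a level_family j a))%E.
Proof.
move=> j_gt0; case: T_inhabited => x.
have [U [UU Ux _ [y Uy xy]]] := level_family_ball x j_gt0.
by apply: le_trans (dist_le_mesh d UU Ux Uy); rewrite lee_fin.
Qed.

Lemma level_family_L_ge j : (0 < j)%N ->
  ((mu * mu)%:E * mesh d (\bigcup_a level_family j a) <= L d (\bigcup_a level_family j a))%E.
Proof.
move=> j_gt0; apply: le_trans (_ : _ <= (mu * mu)%:E * (r ^+ j)%:E)%E _.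
  by apply: lee_wpmul2l; [rewrite lee_fin mulr_ge0 ?ltW | exact: level_family_mesh_le].
rewrite -EFinM; apply: L_ge_ball => x.
have [U [UU Ux xU far]] := level_family_ball x j_gt0.
exists U; split => // y xy; apply: xU; apply: lt_le_trans xy _.
by rewrite -mulrA; apply: ler_piMl mu_le1; rewrite mulr_ge0 ?exprn_ge0 ?ltW.
Qed.

Lemma level_family_mesh j : (0 < j)%N ->
  [/\ ((mu * mu * r ^+ j)%:E <= mesh d (\bigcup_a level_family j a))%E,
      (mesh d (\bigcup_a level_family j a) <= (r ^+ j)%:E)%E &
      ((mu * mu)%:E * mesh d (\bigcup_a level_family j a) <=
         L d (\bigcup_a level_family j a))%E].
Proof.
by move=> j_gt0; split; [exact: level_family_mesh_ge | exact: level_family_mesh_le |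
  exact: level_family_L_ge].
Qed.

Lemma level_family_inscribed i j : (0 < j)%N -> (j < i)%N ->
  inscribed_in (\bigcup_a level_family i a) (\bigcup_a level_family j a).
Proof.
move=> j_gt0 ji U' [a _ U'a]; have i_gt0 := ltn_trans j_gt0 ji.
have [[x U'x]|U'0] := pselect (U' !=set0); last first.
  case: T_inhabited => x; have [U [UU _ _ _]] := level_family_ball x j_gt0.
  by exists U => // y U'y; exfalso; apply: U'0; exists y.
have [U [UU Ux xU _]] := level_family_ball x j_gt0; exists U => // y U'y; apply: xU.
have [B cB U'E] := level_family_core i_gt0 U'a; rewrite U'E in U'x U'y.
have r_le1 : r <= 1 by move: r_le; lra.
have rirj : r ^+ i <= r ^+ j.+1 := ler_wiXn2l (ltW r_gt0) r_le1 ji.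
have : r * r ^+ j < mu * r ^+ j by rewrite ltr_pM2r ?exprn_gt0.
have := cluster_diam cB U'x U'y; rewrite exprS in rirj; lra.
Qed.

Lemma level_family_separated a :
  separated_family (\bigcup_(j in [set j : nat | (0 < j)%N]) level_family j a).
Proof.
move=> U V [j j_gt0 /(level_family_core j_gt0)[B1 cB1 ->]].
move=> [i i_gt0 /(level_family_core i_gt0)[B2 cB2 ->]] _.
have [->|/set0P[z [B1z B2z]]] := eqVneq (cluster a j B1 `&` cluster a i B2) set0.
  by left.
right; have [ji|ij] := leqP j i.
  by right; exact: cluster_nest ji cB1 cB2 B1z B2z.
by left; exact: cluster_nest (ltnW ij) cB2 cB1 B2z B1z.
Qed.

End Construction.

Theorem proposition4p4 (R : realType) (T : Type) (d : T -> T -> R) (n : nat) :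
  is_metric d -> cdim_le d n ->
  exists c0 delta r0 : R, 0 < c0 /\ 0 < delta /\ 0 < r0 /\
  forall r : R, 0 < r < r0 ->
  exists UU : nat -> 'I_n.+1 -> set (set T),
    (forall j : nat, (0 < j)%N ->
       open_covering d (\bigcup_a UU j a) /\ forall a, pairwise_disjoint (UU j a)) /\
    (forall j : nat, (0 < j)%N ->
       ((delta * r ^+ j)%:E <= mesh d (\bigcup_a UU j a))%E /\
       (mesh d (\bigcup_a UU j a) <= (r ^+ j)%:E)%E /\
       (c0%:E * mesh d (\bigcup_a UU j a) <= L d (\bigcup_a UU j a))%E) /\
    (forall i j : nat, (0 < j)%N -> (j < i)%N ->
       inscribed_in (\bigcup_a UU i a) (\bigcup_a UU j a)) /\
    (forall a : 'I_n.+1, separated_family (\bigcup_(j in [set j : nat | (0 < j)%N]) UU j a)).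
Proof.
move=> dm /(cdim_le_lebesgue_colorings dm)[lam [e [lam_gt0 e_gt0 T_inhabited colorings far]]].
have [_ [d0 [dsym dtri]]] := dm; have dxx x : d x x = 0 by apply/d0.
pose mu := Num.min (lam / 4) 1.
have mu_gt0 : 0 < mu by rewrite lt_min ltr01 andbT divr_gt0.
have mu_le1 : mu <= 1 by rewrite ge_min lexx orbT.
have mu_le_lam : 4 * mu <= lam by rewrite mulrC -ler_pdivlMr // ge_min lexx.
exists (mu * mu), (mu * mu), (Num.min (Num.min (1 / 4) mu) e).
do 2 (split; first exact: mulr_gt0).
split; first by rewrite !lt_min -andbA; apply/and3P; split => //; lra.
move=> r /andP[r_gt0]; rewrite lt_min => /andP[]; rewrite lt_min => /andP[r_lt r_lt_mu] r_lt_e.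
have r_in : 0 < r < e by rewrite r_gt0.
have [r_le r_le1] : r <= 1 / 4 /\ r <= 1 by split; lra.
have [F F_lebesgue] := lebesgue_colorings_at_powers r_in r_le1 colorings.
have far_points j : (0 < j)%N -> forall x,
    exists y, lam * (mu * r ^+ j / 2) / 2 < d x y <= mu * r ^+ j / 2.
  by move=> j_gt0; apply: far; apply: scale_in_range; rewrite ?mu_gt0.
exists (level_family d r F); split; [|split; [|split]].
- by move=> j /(level_family_open_covering dxx dsym dtri mu_gt0 mu_le_lam r_gt0 r_le
    r_lt_mu F_lebesgue far_points).
- by move=> j /(level_family_mesh dxx dsym dtri mu_gt0 mu_le1 mu_le_lam r_gt0 r_le
    r_lt_mu F_lebesgue far_points T_inhabited)[].
- by move=> i j j_gt0; apply: (level_family_inscribed dxx dsym dtri mu_gt0 mu_le_lam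
    r_gt0 r_le r_lt_mu F_lebesgue far_points T_inhabited j_gt0).
- exact: level_family_separated.
Qed.
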